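(* Let $h>0$, $N\ge1$, $\delta_0\in(0,h/2)$, and let $\tilde A_1,\dots,\tilde A_N$ be nonzero constants. Define $\tilde\theta_i^{+}(x,y)=\tilde A_i\dfrac{\cosh(i(h-y))}{\sinh(ih)}\cos(ix)$ and $\tilde\theta_i^{-}(x,y)=\tilde A_i\dfrac{\cosh(i(h-y))}{\sinh(ih)}\sin(ix)$. Given vectors $f^+=(f_1^+,\dots,f_N^+)$ and $f^-=(f_1^-,\dots,f_N^-)$, there exists a smooth $2\pi$-periodic in $x$ function $\eta_1(x,y)$ with support in $\{(x,y):x\in\mathbb R,\ \delta_0<y<h\}$ such that $\langle\tilde\theta_i^{\pm},\eta_1\rangle=f_i^{\pm}$ for $i=1,\dots,N$.
   Context: $\langle u,v\rangle=\int_0^h\int_0^{2\pi}u(x,y)v(x,y)\,dx\,dy$. *)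

From Stdlib Require Import Reals.
From Coquelicot Require Import Coquelicot.
Open Scope R_scope.

Definition theta_plus (h : R) (A : nat -> R) (i : nat) (x y : R) : R :=
  A i * (cosh (INR i * (h - y)) / sinh (INR i * h)) * cos (INR i * x).

Definition theta_minus (h : R) (A : nat -> R) (i : nat) (x y : R) : R :=
  A i * (cosh (INR i * (h - y)) / sinh (INR i * h)) * sin (INR i * x).

Definition inner (h : R) (u v : R -> R -> R) : R :=
  RInt (fun y => RInt (fun x => u x y * v x y) 0 (2 * PI)) 0 h.

(* C^infinity on R^2: a family D m n playing the role of d^m_x d^n_y f,
   with D 0 0 = f, every partial derivative of every D m n existing and
   given by the next member, and every D m n jointly continuous. *)
Definition smooth2 (f : R -> R -> R) : Prop :=
  exists D : nat -> nat -> R -> R -> R,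
    D O O = f /\
    (forall m n x y, is_derive (fun t => D m n t y) x (D (S m) n x y)) /\
    (forall m n x y, is_derive (fun t => D m n x t) y (D m (S n) x y)) /\
    (forall m n (p : R * R),
        continuous (fun q : R * R => D m n (fst q) (snd q)) p).

Definition periodic_x (f : R -> R -> R) (T : R) : Prop :=
  forall x y, f (x + T) y = f x y.

Definition in_support (f : R -> R -> R) (x y : R) : Prop :=
  forall eps : R, 0 < eps ->
    exists x' y', Rabs (x - x') < eps /\ Rabs (y - y') < eps /\ f x' y' <> 0.

From Stdlib Require Import Reals Lra Lia.
From Coquelicot Require Import Coquelicot.
Open Scope R_scope.

(* Take eta1 x y = T x * b y, with b a smooth bump (built from exp (-1/t))
   supported in a closed strip inside (delta0, h) and T a trigonometric
   polynomial of degree N.  As theta_i^+- is separable too,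
   <theta_i^+-, eta1> = A_i * (int_0^h K_i b) * pi * (i-th cosine or sine
   coefficient of T), where K_i y = cosh (i (h - y)) / sinh (i h) > 0 makes the
   y-integral positive; so the coefficients of T can be solved for. *)

Fixpoint derivable_n (n : nat) (f : R -> R) : Prop :=
  match n with
  | O => True
  | S n => (forall x, ex_derive f x) /\ derivable_n n (Derive f)
  end.

Lemma derivable_n_ext n : forall f g,
  (forall x, f x = g x) -> derivable_n n f -> derivable_n n g.
Proof.
induction n as [|n IH]; simpl; auto.
intros f g E [Df Hf]; split.
- intros x; apply ex_derive_ext with f; auto.
- apply IH with (Derive f); auto. intros x; apply Derive_ext; auto.
Qed.

Lemma derivable_n_S n : forall f, derivable_n (S n) f -> derivable_n n f.
Proof.
induction n as [|n IH]; simpl; auto.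
intros f [Df Hf]; split; auto.
Qed.

Lemma derivable_n_plus n : forall f g,
  derivable_n n f -> derivable_n n g -> derivable_n n (fun x => f x + g x).
Proof.
induction n as [|n IH]; simpl; auto.
intros f g [Df Hf] [Dg Hg]; split.
- intros x; apply (ex_derive_plus f g); auto.
- apply derivable_n_ext with (fun x => Derive f x + Derive g x); auto.
  intros x; rewrite Derive_plus; auto.
Qed.

Lemma derivable_n_scal n : forall k f,
  derivable_n n f -> derivable_n n (fun x => k * f x).
Proof.
induction n as [|n IH]; simpl; auto.
intros k f [Df Hf]; split.
- intros x; apply (ex_derive_scal f); auto.
- apply derivable_n_ext with (fun x => k * Derive f x); auto.
  intros x; rewrite Derive_scal; auto.
Qed.

Lemma derivable_n_mult n : forall f g,
  derivable_n n f -> derivable_n n g -> derivable_n n (fun x => f x * g x).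
Proof.
induction n as [|n IH]; simpl; auto.
intros f g [Df Hf] [Dg Hg]; split.
- intros x; apply ex_derive_mult; auto.
- apply derivable_n_ext with (fun x => Derive f x * g x + f x * Derive g x).
  + intros x; rewrite Derive_mult; auto.
  + apply derivable_n_plus; apply IH; auto.
    * apply (derivable_n_S n g); simpl; auto.
    * apply (derivable_n_S n f); simpl; auto.
Qed.

Lemma derivable_n_comp_affine n : forall al be f,
  derivable_n n f -> derivable_n n (fun x => f (al * x + be)).
Proof.
induction n as [|n IH]; simpl; auto.
intros al be f [Df Hf]; split.
- intros x. apply (ex_derive_comp f (fun x => al * x + be)); auto.
  auto_derive; auto.
- apply derivable_n_ext with (fun x => al * Derive f (al * x + be)).
  + intros x. symmetry. apply is_derive_unique.
    apply (is_derive_comp f (fun x => al * x + be)).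
    * apply Derive_correct; auto.
    * auto_derive; auto; ring.
  + apply derivable_n_scal, IH; auto.
Qed.

Lemma is_derive_Derive_n f : (forall n, derivable_n n f) ->
  forall n x, is_derive (Derive_n f n) x (Derive_n f (S n) x).
Proof.
intros Hf n x. apply Derive_correct.
specialize (Hf (S n)). revert f Hf x.
induction n as [|n IH]; intros f [Df Hf] x; auto.
apply ex_derive_ext with (Derive_n (Derive f) n).
- intros t; change (Derive f) with (Derive_n f 1).
  rewrite Derive_n_comp, Nat.add_1_r; reflexivity.
- apply IH; exact Hf.
Qed.

Definition flat (k : nat) (t : R) : R :=
  if Rlt_dec 0 t then exp (- / t) * (/ t) ^ k else 0.

Lemma flat_pos k t : 0 < t -> 0 < flat k t.
Proof.
intros Ht; unfold flat; destruct (Rlt_dec 0 t); [|lra].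
apply Rmult_lt_0_compat; [apply exp_pos | apply pow_lt, Rinv_0_lt_compat; lra].
Qed.

Lemma flat_nonneg k t : 0 <= flat k t.
Proof.
unfold flat; destruct (Rlt_dec 0 t); [|lra].
apply Rmult_le_pos; [apply Rlt_le, exp_pos | apply pow_le, Rlt_le, Rinv_0_lt_compat; lra].
Qed.

Lemma flat_eq0 k t : t <= 0 -> flat k t = 0.
Proof. intros; unfold flat; destruct (Rlt_dec 0 t); [lra | auto]. Qed.

Lemma exp_INR_mul n v : exp (INR n * v) = exp v ^ n.
Proof.
induction n as [|n IH].
- rewrite Rmult_0_l; apply exp_0.
- rewrite S_INR, Rmult_plus_distr_r, Rmult_1_l, exp_plus, IH; simpl; ring.
Qed.

(* From 1 + u/n <= exp (u/n), raised to the n-th power. *)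
Lemma pow_le_exp n u : 0 < u -> (1 <= n)%nat -> u ^ n <= INR n ^ n * exp u.
Proof.
intros Hu Hn.
assert (Hn' : 0 < INR n) by (apply lt_0_INR; lia).
assert (Hun : 0 < u / INR n) by (apply Rdiv_lt_0_compat; lra).
replace u with (INR n * (u / INR n)) at 1 by (field; lra).
replace (exp u) with (exp (u / INR n) ^ n)
  by (rewrite <- exp_INR_mul; f_equal; field; lra).
rewrite Rpow_mult_distr.
apply Rmult_le_compat_l; [apply pow_le; lra|].
apply pow_incr; split; [lra|].
assert (1 + u / INR n < exp (u / INR n)) by (apply exp_ineq1; lra). lra.
Qed.

Lemma flat_le_sqr k s : Rabs (flat k s) <= INR (k + 2) ^ (k + 2) * s ^ 2.
Proof.
unfold flat. destruct (Rlt_dec 0 s) as [Hs|Hs].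
- assert (Hi : 0 < / s) by (apply Rinv_0_lt_compat; lra).
  assert (He : 0 < exp (- / s)) by apply exp_pos.
  rewrite Rabs_pos_eq by (apply Rmult_le_pos; [lra | apply pow_le; lra]).
  replace (exp (- / s) * (/ s) ^ k)
    with (exp (- / s) * (/ s) ^ (k + 2) * s ^ 2) by (rewrite pow_add; field; lra).
  apply Rmult_le_compat_r; [apply pow2_ge_0|].
  replace (INR (k + 2) ^ (k + 2))
    with (exp (- / s) * (INR (k + 2) ^ (k + 2) * exp (/ s))).
  + apply Rmult_le_compat_l; [lra|]. apply pow_le_exp; [lra | lia].
  + rewrite (Rmult_comm (INR _ ^ _)), <- Rmult_assoc, <- exp_plus, Rplus_opp_l, exp_0; ring.
- rewrite Rabs_R0. apply Rmult_le_pos; [apply pow_le, pos_INR | apply pow2_ge_0].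
Qed.

Lemma is_derive_0_of_le_sqr (f : R -> R) C :
  (forall s, Rabs (f s) <= C * s ^ 2) -> is_derive f 0 0.
Proof.
intros Hf.
assert (Hf0 : f 0 = 0).
{ specialize (Hf 0). rewrite pow_i, Rmult_0_r in Hf by lia.
  apply Rabs_eq_0, Rle_antisym; [exact Hf | apply Rabs_pos]. }
assert (HC : 0 <= C).
{ specialize (Hf 1). rewrite pow1, Rmult_1_r in Hf.
  apply Rle_trans with (Rabs (f 1)); [apply Rabs_pos | exact Hf]. }
apply is_derive_Reals. intros eps Heps.
assert (Hd : 0 < eps / (C + 1)) by (apply Rdiv_lt_0_compat; lra).
exists (mkposreal _ Hd). intros s Hs0 Hs. simpl in Hs.
rewrite Rplus_0_l, Hf0, !Rminus_0_r.
assert (Ha : 0 < Rabs s) by (apply Rabs_pos_lt; auto).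
unfold Rdiv. rewrite Rabs_mult, Rabs_inv.
apply Rmult_lt_reg_r with (Rabs s); [exact Ha|].
rewrite Rmult_assoc, Rinv_l, Rmult_1_r by lra.
apply Rle_lt_trans with (C * s ^ 2); [apply Hf|].
replace (s ^ 2) with (Rabs s * Rabs s) by (rewrite <- Rabs_mult, Rabs_pos_eq; nra).
assert (Rabs s * (C + 1) < eps) by (apply Rmult_lt_reg_r with (/ (C + 1));
  [apply Rinv_0_lt_compat; lra | rewrite Rmult_assoc, Rinv_r, Rmult_1_r; lra]).
nra.
Qed.

Lemma is_derive_flat k t :
  is_derive (flat k) t (flat (k + 2) t - INR k * flat (k + 1) t).
Proof.
destruct (Rtotal_order t 0) as [Ht|[->|Ht]].
- apply is_derive_ext_loc with (fun _ => 0).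
  { apply (filter_imp (fun u => u < 0)); [|exact (open_lt 0 t Ht)].
    intros u Hu; rewrite flat_eq0; lra. }
  rewrite !flat_eq0 by lra. replace (0 - INR k * 0) with 0 by ring. auto_derive; auto.
- rewrite !flat_eq0 by lra. replace (0 - INR k * 0) with 0 by ring.
  apply (is_derive_0_of_le_sqr _ _ (flat_le_sqr k)).
- apply is_derive_ext_loc with (fun t => exp (- / t) * (/ t) ^ k).
  { apply (filter_imp (fun u => 0 < u)); [|exact (open_gt 0 t Ht)].
    intros u Hu; unfold flat; destruct (Rlt_dec 0 u); [auto | lra]. }
  unfold flat; destruct (Rlt_dec 0 t); [|lra].
  auto_derive; [lra|]. rewrite !pow_add. destruct k as [|[|k]]; simpl; field; lra.
Qed.

Lemma derivable_n_flat n : forall k, derivable_n n (flat k).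
Proof.
induction n as [|n IH]; intros k; simpl; auto. split.
- intros x; eexists; apply is_derive_flat.
- apply derivable_n_ext with (fun t => flat (k + 2) t + - INR k * flat (k + 1) t).
  + intros x; rewrite (is_derive_unique _ _ _ (is_derive_flat k x)); ring.
  + apply derivable_n_plus, derivable_n_scal; auto.
Qed.

Definition bump (a c y : R) : R := flat 0 (y - a) * flat 0 (c - y).

Lemma bump_pos a c y : a < y < c -> 0 < bump a c y.
Proof. intros Hy; apply Rmult_lt_0_compat; apply flat_pos; lra. Qed.

Lemma bump_nonneg a c y : 0 <= bump a c y.
Proof. apply Rmult_le_pos; apply flat_nonneg. Qed.

Lemma bump_neq0 a c y : bump a c y <> 0 -> a < y < c.
Proof.
unfold bump; intros Hb.
destruct (Rlt_le_dec a y); [|rewrite (flat_eq0 0 (y - a)) in Hb by lra; lra].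
destruct (Rlt_le_dec y c); [lra|rewrite (flat_eq0 0 (c - y)) in Hb by lra; lra].
Qed.

Lemma derivable_n_bump a c n : derivable_n n (bump a c).
Proof.
apply derivable_n_mult.
- apply derivable_n_ext with (fun y => flat 0 (1 * y + - a)).
  { intros y; f_equal; ring. }
  apply derivable_n_comp_affine, derivable_n_flat.
- apply derivable_n_ext with (fun y => flat 0 (-1 * y + c)).
  { intros y; f_equal; ring. }
  apply derivable_n_comp_affine, derivable_n_flat.
Qed.

Lemma is_RInt_lincomb (f g : R -> R) (a b u v al be : R) :
  is_RInt f a b u -> is_RInt g a b v ->
  is_RInt (fun x => al * f x + be * g x) a b (al * u + be * v).
Proof.
intros Hf Hg.
apply (is_RInt_plus (fun x => al * f x) (fun x => be * g x));
  apply (is_RInt_scal (V := R_CompleteNormedModule)); assumption.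
Qed.

Lemma is_RInt_eq_value (f : R -> R) (a b v w : R) : is_RInt f a b v -> v = w -> is_RInt f a b w.
Proof. intros H <-; exact H. Qed.

Lemma is_RInt_ext_R (f g : R -> R) (a b v : R) :
  (forall x, f x = g x) -> is_RInt f a b v -> is_RInt g a b v.
Proof. intros E; apply is_RInt_ext; intros x _; apply E. Qed.

(* What the Fourier integrals below need of "r is an integer". *)
Definition full_turn (r : R) : Prop := sin (2 * PI * r) = 0 /\ cos (2 * PI * r) = 1.

Lemma full_turn_INR i : full_turn (INR i).
Proof.
split; replace (2 * PI * INR i) with (0 + 2 * INR i * PI) by ring.
- rewrite sin_period; apply sin_0.
- rewrite cos_period; apply cos_0.
Qed.

Lemma full_turn_plus r s : full_turn r -> full_turn s -> full_turn (r + s).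
Proof.
intros [Sr Cr] [Ss Cs]; split; rewrite Rmult_plus_distr_l.
- rewrite sin_plus, Sr, Cr, Ss, Cs; ring.
- rewrite cos_plus, Sr, Cr, Ss, Cs; ring.
Qed.

Lemma full_turn_minus r s : full_turn r -> full_turn s -> full_turn (r - s).
Proof.
intros [Sr Cr] [Ss Cs]; split; rewrite Rmult_minus_distr_l.
- rewrite sin_minus, Sr, Cr, Ss, Cs; ring.
- rewrite cos_minus, Sr, Cr, Ss, Cs; ring.
Qed.

Lemma is_RInt_cos_full_turn r : full_turn r ->
  is_RInt (fun x => cos (r * x)) 0 (2 * PI) (if Req_EM_T r 0 then 2 * PI else 0).
Proof.
intros [Sr Cr]. destruct (Req_EM_T r 0) as [->|Hr].
- apply is_RInt_ext_R with (fun _ => 1).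
  { intros x; rewrite Rmult_0_l, cos_0; reflexivity. }
  eapply is_RInt_eq_value; [apply (is_RInt_const (V := R_CompleteNormedModule))|].
  unfold scal; simpl; unfold mult; simpl; ring.
- eapply is_RInt_eq_value; [apply (is_RInt_derive (fun x => sin (r * x) / r))|].
  + intros x _; auto_derive; auto; field; exact Hr.
  + intros x _; apply (ex_derive_continuous (fun x => cos (r * x))); auto_derive; auto.
  + unfold minus, plus, opp; simpl.
    rewrite Rmult_0_r, sin_0, Rmult_comm, Sr; field; exact Hr.
Qed.

Lemma is_RInt_sin_full_turn r : full_turn r ->
  is_RInt (fun x => sin (r * x)) 0 (2 * PI) 0.
Proof.
intros [Sr Cr]. destruct (Req_EM_T r 0) as [->|Hr].
- apply is_RInt_ext_R with (fun _ => 0).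
  { intros x; rewrite Rmult_0_l, sin_0; reflexivity. }
  eapply is_RInt_eq_value; [apply (is_RInt_const (V := R_CompleteNormedModule))|].
  unfold scal; simpl; unfold mult; simpl; ring.
- eapply is_RInt_eq_value; [apply (is_RInt_derive (fun x => - cos (r * x) / r))|].
  + intros x _; auto_derive; auto; field; exact Hr.
  + intros x _; apply (ex_derive_continuous (fun x => sin (r * x))); auto_derive; auto.
  + unfold minus, plus, opp; simpl.
    rewrite Rmult_0_r, cos_0, Rmult_comm, Cr; field; exact Hr.
Qed.

Ltac full_turn_tac :=
  repeat first [apply full_turn_minus | apply full_turn_plus | apply full_turn_INR].

Lemma is_RInt_cos_cos i j : (1 <= i)%nat -> (1 <= j)%nat ->
  is_RInt (fun x => cos (INR i * x) * cos (INR j * x)) 0 (2 * PI)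
    (if Nat.eq_dec i j then PI else 0).
Proof.
intros Hi Hj.
apply is_RInt_ext_R with
  (fun x => / 2 * cos ((INR i - INR j) * x) + / 2 * cos ((INR i + INR j) * x)).
{ intros x; rewrite Rmult_minus_distr_r, Rmult_plus_distr_r, cos_minus, cos_plus; field. }
eapply is_RInt_eq_value;
  [apply is_RInt_lincomb; apply is_RInt_cos_full_turn; full_turn_tac|].
apply le_INR in Hi, Hj; simpl in Hi, Hj.
destruct (Nat.eq_dec i j) as [->|Hij];
  [|assert (INR i <> INR j) by (intros E; apply Hij, INR_eq, E)];
  do 2 destruct Req_EM_T; lra.
Qed.

Lemma is_RInt_sin_sin i j : (1 <= i)%nat -> (1 <= j)%nat ->
  is_RInt (fun x => sin (INR i * x) * sin (INR j * x)) 0 (2 * PI)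
    (if Nat.eq_dec i j then PI else 0).
Proof.
intros Hi Hj.
apply is_RInt_ext_R with
  (fun x => / 2 * cos ((INR i - INR j) * x) + - / 2 * cos ((INR i + INR j) * x)).
{ intros x; rewrite Rmult_minus_distr_r, Rmult_plus_distr_r, cos_minus, cos_plus; field. }
eapply is_RInt_eq_value;
  [apply is_RInt_lincomb; apply is_RInt_cos_full_turn; full_turn_tac|].
apply le_INR in Hi, Hj; simpl in Hi, Hj.
destruct (Nat.eq_dec i j) as [->|Hij];
  [|assert (INR i <> INR j) by (intros E; apply Hij, INR_eq, E)];
  do 2 destruct Req_EM_T; lra.
Qed.

Lemma is_RInt_cos_sin i j :
  is_RInt (fun x => cos (INR i * x) * sin (INR j * x)) 0 (2 * PI) 0.
Proof.
apply is_RInt_ext_R with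
  (fun x => / 2 * sin ((INR i + INR j) * x) + - / 2 * sin ((INR i - INR j) * x)).
{ intros x; rewrite Rmult_minus_distr_r, Rmult_plus_distr_r, sin_minus, sin_plus; field. }
eapply is_RInt_eq_value;
  [apply is_RInt_lincomb; apply is_RInt_sin_full_turn; full_turn_tac|].
ring.
Qed.

Lemma is_RInt_sin_cos i j :
  is_RInt (fun x => sin (INR i * x) * cos (INR j * x)) 0 (2 * PI) 0.
Proof.
apply is_RInt_ext_R with (fun x => cos (INR j * x) * sin (INR i * x)).
{ intros x; ring. }
apply is_RInt_cos_sin.
Qed.

(* [trig_sum a c m n] is the m-th derivative of
   [x |-> sum_(j=1..n) (a j * cos (j x) + c j * sin (j x))],
   as cos and sin shift by a quarter turn under differentiation. *)
Fixpoint trig_sum (a c : nat -> R) (m n : nat) (x : R) : R :=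
  match n with
  | O => 0
  | S n' => trig_sum a c m n' x
      + INR (S n') ^ m * (a (S n') * cos (INR (S n') * x + INR m * (PI / 2))
                          + c (S n') * sin (INR (S n') * x + INR m * (PI / 2)))
  end.

Lemma is_derive_trig_sum a c m n x :
  is_derive (trig_sum a c m n) x (trig_sum a c (S m) n x).
Proof.
induction n as [|n IH]; cbn [trig_sum].
- auto_derive; auto.
- apply (is_derive_plus (trig_sum a c m n)); auto.
  set (j := INR (S n)); set (ph := INR m * (PI / 2)).
  replace (INR (S m) * (PI / 2)) with (ph + PI / 2) by (unfold ph; rewrite S_INR; ring).
  replace (j * x + (ph + PI / 2)) with (j * x + ph + PI / 2) by ring.
  rewrite (cos_plus (j * x + ph)), (sin_plus (j * x + ph)), cos_PI2, sin_PI2.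
  auto_derive; auto. simpl; ring.
Qed.

Lemma trig_sum_periodic a c m n x :
  trig_sum a c m n (x + 2 * PI) = trig_sum a c m n x.
Proof.
induction n as [|n IH]; cbn [trig_sum]; auto.
replace (INR (S n) * (x + 2 * PI) + INR m * (PI / 2))
  with (INR (S n) * x + INR m * (PI / 2) + 2 * INR (S n) * PI) by ring.
rewrite IH, cos_period, sin_period; reflexivity.
Qed.

Lemma is_RInt_mul_trig_sum (u : R -> R) i p q a c n : (1 <= i)%nat ->
  (forall j, (1 <= j)%nat -> is_RInt (fun x => u x * cos (INR j * x)) 0 (2 * PI)
                               (if Nat.eq_dec i j then p else 0)) ->
  (forall j, (1 <= j)%nat -> is_RInt (fun x => u x * sin (INR j * x)) 0 (2 * PI)
                               (if Nat.eq_dec i j then q else 0)) ->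
  is_RInt (fun x => u x * trig_sum a c 0 n x) 0 (2 * PI)
    (if (i <=? n)%nat then a i * p + c i * q else 0).
Proof.
intros Hi Hcos Hsin. induction n as [|n IH].
- apply is_RInt_ext_R with (fun _ => 0); [intros x; simpl; ring|].
  eapply is_RInt_eq_value; [apply (is_RInt_const (V := R_CompleteNormedModule))|].
  destruct (Nat.leb_spec i 0); [lia|]. unfold scal; simpl; unfold mult; simpl; ring.
- apply is_RInt_ext_R with (fun x => 1 * (u x * trig_sum a c 0 n x)
    + 1 * (a (S n) * (u x * cos (INR (S n) * x)) + c (S n) * (u x * sin (INR (S n) * x)))).
  { intros x; cbn [trig_sum]; rewrite Rmult_0_l, !Rplus_0_r; simpl pow; ring. }
  eapply is_RInt_eq_value;
    [apply is_RInt_lincomb; [exact IH | apply is_RInt_lincomb; [apply Hcos | apply Hsin]; lia]|].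
  destruct (Nat.eq_dec i (S n)) as [Hn|Hn];
    destruct (Nat.leb_spec i n), (Nat.leb_spec i (S n)); try lia; subst; ring.
Qed.

Lemma is_RInt_cos_trig_sum a c i n : (1 <= i <= n)%nat ->
  is_RInt (fun x => cos (INR i * x) * trig_sum a c 0 n x) 0 (2 * PI) (a i * PI).
Proof.
intros Hi. eapply is_RInt_eq_value.
- apply (is_RInt_mul_trig_sum _ i PI 0); [lia| |].
  + intros j Hj; apply is_RInt_cos_cos; lia.
  + intros j _; destruct (Nat.eq_dec i j); apply is_RInt_cos_sin.
- destruct (Nat.leb_spec i n); [ring | lia].
Qed.

Lemma is_RInt_sin_trig_sum a c i n : (1 <= i <= n)%nat ->
  is_RInt (fun x => sin (INR i * x) * trig_sum a c 0 n x) 0 (2 * PI) (c i * PI).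
Proof.
intros Hi. eapply is_RInt_eq_value.
- apply (is_RInt_mul_trig_sum _ i 0 PI); [lia| |].
  + intros j _; destruct (Nat.eq_dec i j); apply is_RInt_sin_cos.
  + intros j Hj; apply is_RInt_sin_sin; lia.
- destruct (Nat.leb_spec i n); [ring | lia].
Qed.

Lemma smooth2_mul_separable (f g : R -> R) (Df Dg : nat -> R -> R) :
  Df O = f -> Dg O = g ->
  (forall m x, is_derive (Df m) x (Df (S m) x)) ->
  (forall n y, is_derive (Dg n) y (Dg (S n) y)) ->
  smooth2 (fun x y => f x * g y).
Proof.
intros <- <- HDf HDg.
exists (fun m n x y => Df m x * Dg n y). split; [reflexivity|split; [|split]].
- intros m n x y. apply is_derive_ext with (fun t => Dg n y * Df m t); [intros; apply Rmult_comm|].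
  rewrite Rmult_comm. apply (is_derive_scal (Df m)), HDf.
- intros m n x y. apply (is_derive_scal (Dg n)), HDg.
- intros m n [x y].
  apply (continuous_mult (fun q : R * R => Df m (fst q)) (fun q : R * R => Dg n (snd q))).
  + apply (continuous_comp fst (Df m)); [apply continuous_fst|].
    apply (ex_derive_continuous (Df m)); eexists; apply HDf.
  + apply (continuous_comp snd (Dg n)); [apply continuous_snd|].
    apply (ex_derive_continuous (Dg n)); eexists; apply HDg.
Qed.

Lemma in_support_strip (f : R -> R -> R) a c x y :
  (forall x' y', f x' y' <> 0 -> a < y' < c) -> in_support f x y -> a <= y <= c.
Proof.
intros Hf Hs.
destruct (Rlt_le_dec y a) as [Hya|Hay]; [|destruct (Rlt_le_dec c y) as [Hcy|Hyc]; [|lra]].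
- destruct (Hs (a - y)) as [x' [y' [_ [Hy Hnz]]]]; [lra|].
  apply Hf in Hnz. apply Rabs_def2 in Hy. lra.
- destruct (Hs (y - c)) as [x' [y' [_ [Hy Hnz]]]]; [lra|].
  apply Hf in Hnz. apply Rabs_def2 in Hy. lra.
Qed.

Lemma RInt_gt_0_of_pos_on (f : R -> R) a b lo hi :
  a <= lo < hi /\ hi <= b -> (forall x, continuous f x) ->
  (forall x, 0 <= f x) -> (forall x, lo < x < hi -> 0 < f x) ->
  0 < RInt f a b.
Proof.
intros Hab Hc Hnn Hpos.
assert (Hex : forall u v, ex_RInt f u v) by (intros; apply (ex_RInt_continuous f); auto).
rewrite <- (RInt_Chasles f a lo b), <- (RInt_Chasles f lo hi b) by auto.
assert (0 <= RInt f a lo) by (apply RInt_ge_0; auto; lra).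
assert (0 <= RInt f hi b) by (apply RInt_ge_0; auto; lra).
assert (0 < RInt f lo hi) by (apply RInt_gt_0; auto; lra).
unfold plus; simpl; lra.
Qed.

Lemma inner_separable h (th eta : R -> R -> R) al (k u g b : R -> R) I :
  (forall x y, th x y * eta x y = al * (k y * b y) * (u x * g x)) ->
  is_RInt (fun x => u x * g x) 0 (2 * PI) I ->
  ex_RInt (fun y => k y * b y) 0 h ->
  inner h th eta = al * RInt (fun y => k y * b y) 0 h * I.
Proof.
intros Hsep HI Hkb. unfold inner.
rewrite (RInt_ext _ (fun y => al * I * (k y * b y))).
- rewrite (RInt_scal (V := R_CompleteNormedModule)) by exact Hkb.
  unfold scal; simpl; unfold mult; simpl; ring.
- intros y _. apply is_RInt_unique.
  apply is_RInt_ext_R with (fun x => al * (k y * b y) * (u x * g x)).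
  + intros x; symmetry; apply Hsep.
  + eapply is_RInt_eq_value; [apply (is_RInt_scal (V := R_CompleteNormedModule)), HI|].
    unfold scal; simpl; unfold mult; simpl; ring.
Qed.

Lemma cosh_pos x : 0 < cosh x.
Proof. unfold cosh; pose proof (exp_pos x); pose proof (exp_pos (- x)); lra. Qed.

Lemma sinh_pos x : 0 < x -> 0 < sinh x.
Proof. intros Hx; rewrite <- sinh_0; apply sinh_lt, Hx. Qed.

Definition kernel (h : R) (i : nat) (y : R) : R :=
  cosh (INR i * (h - y)) / sinh (INR i * h).

Section KernelBump.

Variables (h lo hi : R) (i : nat).
Hypotheses (Hh : 0 < h) (Hi : (1 <= i)%nat).

Lemma kernel_pos y : 0 < kernel h i y.
Proof.
apply Rdiv_lt_0_compat; [apply cosh_pos|].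
apply sinh_pos, Rmult_lt_0_compat; [apply lt_0_INR; lia | exact Hh].
Qed.

Lemma ex_derive_kernel_bump y : ex_derive (fun y => kernel h i y * bump lo hi y) y.
Proof.
apply ex_derive_mult; [|exact (proj1 (derivable_n_bump lo hi 1) y)].
unfold kernel, cosh; auto_derive; exact I.
Qed.

Lemma continuous_kernel_bump y : continuous (fun y => kernel h i y * bump lo hi y) y.
Proof. apply (ex_derive_continuous (fun y => kernel h i y * bump lo hi y)), ex_derive_kernel_bump. Qed.

Lemma ex_RInt_kernel_bump : ex_RInt (fun y => kernel h i y * bump lo hi y) 0 h.
Proof.
apply (ex_RInt_continuous (fun y => kernel h i y * bump lo hi y)).
intros y _; apply continuous_kernel_bump.
Qed.

Lemma RInt_kernel_bump_pos : 0 <= lo < hi /\ hi <= h ->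
  0 < RInt (fun y => kernel h i y * bump lo hi y) 0 h.
Proof.
intros Hstrip; apply RInt_gt_0_of_pos_on with lo hi; [exact Hstrip | exact continuous_kernel_bump | |].
- intros y; apply Rmult_le_pos; [apply Rlt_le, kernel_pos | apply bump_nonneg].
- intros y Hy; apply Rmult_lt_0_compat; [apply kernel_pos | apply bump_pos, Hy].
Qed.

End KernelBump.

Theorem lemma9p2 (h : R) (N : nat) (delta0 : R) (A : nat -> R)
  (fp fm : nat -> R) :
  0 < h -> (1 <= N)%nat -> 0 < delta0 < h / 2 ->
  (forall i, (1 <= i <= N)%nat -> A i <> 0) ->
  exists eta1 : R -> R -> R,
    smooth2 eta1 /\ periodic_x eta1 (2 * PI) /\
    (forall x y, in_support eta1 x y -> delta0 < y < h) /\
    (forall i, (1 <= i <= N)%nat ->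
       inner h (theta_plus h A i) eta1 = fp i /\
       inner h (theta_minus h A i) eta1 = fm i).
Proof.
intros Hh _ Hd HA.
set (lo := (2 * delta0 + h) / 3); set (hi := (delta0 + 2 * h) / 3).
set (M := fun i => RInt (fun y => kernel h i y * bump lo hi y) 0 h).
set (a := fun i => fp i / (A i * M i * PI)); set (c := fun i => fm i / (A i * M i * PI)).
exists (fun x y => trig_sum a c 0 N x * bump lo hi y).
split; [|split; [|split]].
- apply smooth2_mul_separable with (fun m => trig_sum a c m N) (Derive_n (bump lo hi)); auto.
  + intros m x; apply is_derive_trig_sum.
  + apply is_derive_Derive_n; intros n; apply derivable_n_bump.
- intros x y; rewrite trig_sum_periodic; reflexivity.
- intros x y Hs; apply in_support_strip with (a := lo) (c := hi) in Hs; [unfold lo, hi in Hs; lra|].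
  intros x' y' Hnz; apply bump_neq0; intros E; apply Hnz; rewrite E; ring.
- intros i Hi.
  assert (HM : M i <> 0)
    by (apply Rgt_not_eq, RInt_kernel_bump_pos; [exact Hh | lia | unfold lo, hi; lra]).
  split.
  + rewrite (inner_separable h _ _ (A i) (kernel h i) (fun x => cos (INR i * x))
      (trig_sum a c 0 N) (bump lo hi) (a i * PI)).
    * fold (M i); unfold a; field; repeat split; auto using PI_neq0.
    * intros x y; unfold theta_plus, kernel; ring.
    * apply is_RInt_cos_trig_sum, Hi.
    * apply ex_RInt_kernel_bump.
  + rewrite (inner_separable h _ _ (A i) (kernel h i) (fun x => sin (INR i * x))
      (trig_sum a c 0 N) (bump lo hi) (c i * PI)).
    * fold (M i); unfold c; field; repeat split; auto using PI_neq0.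
    * intros x y; unfold theta_minus, kernel; ring.
    * apply is_RInt_sin_trig_sum, Hi.
    * apply ex_RInt_kernel_bump.
Qed.
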